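(* Let $L\in\mathrm{Gr}(V,m)$ and let $A:V\to W$ be any linear map into a finite-dimensional real vector space $W$ with $\ker(A)=L$. Then $$\mathrm{Sym}\big(0,A(\{x\in K:\|x\|\le1\})\big)=\min_{v\in K,\ \|v\|=1}\ \max_{x\in K,\ t\in\mathbb R}\{t: x+tv\in L,\ \|x\|\le1\}.$$ In particular the left-hand side, denoted $\mathrm{Sym}(L)$, depends only on $L$, $K$ and $\|\cdot\|$, not on $A$.
   Context: $V$ is a finite-dimensional real vector space with inner product $\langle\cdot,\cdot\rangle$; $K\subseteq V$ a regular closed convex cone; $\|\cdot\|$ an arbitrary norm on $V$; $\mathrm{Gr}(V,m)$ the set of $m$-dimensional subspaces ($1\le m<\dim V$). For a set $S$ in a vector space with $0\in S$, $\mathrm{Sym}(0,S):=\max\{t\ge0: w\in S\Rightarrow -tw\in S\}$. *)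

From Stdlib Require Import Reals.
From Stdlib Require Vectors.Fin.
Open Scope R_scope.

(* The real vector space R^n, realised as functions Fin.t n -> R
   (with the standard inner product; every finite-dimensional real
   inner-product space is isometric to one of these). *)
Definition vec (n : nat) := Fin.t n -> R.

Definition vzero {n} : vec n := fun _ => 0.
Definition vadd {n} (x y : vec n) : vec n := fun i => x i + y i.
Definition vscale {n} (a : R) (x : vec n) : vec n := fun i => a * x i.

Definition linear_map {n p} (f : vec n -> vec p) : Prop :=
  (forall x y, f (vadd x y) = vadd (f x) (f y)) /\
  (forall a x, f (vscale a x) = vscale a (f x)).

Definition in_Grassmannian (n m : nat) (L : vec n -> Prop) : Prop :=
  exists f : vec m -> vec n,
    linear_map f /\
    (forall u w, f u = f w -> u = w) /\
    (forall x, L x <-> exists u, f u = x).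

Definition is_norm {n} (N : vec n -> R) : Prop :=
  (forall x, N x = 0 -> x = vzero) /\
  (forall a x, N (vscale a x) = Rabs a * N x) /\
  (forall x y, N (vadd x y) <= N x + N y).

(* Regular closed convex cone: a closed convex cone that is pointed
   (K ∩ -K = {0}) and has nonempty interior.  Topology = the (unique)
   Euclidean topology, expressed coordinatewise. *)
Definition is_cone {n} (K : vec n -> Prop) : Prop :=
  K vzero /\ forall a x, 0 <= a -> K x -> K (vscale a x).
Definition is_convex {n} (K : vec n -> Prop) : Prop :=
  forall x y t, K x -> K y -> 0 <= t <= 1 ->
    K (vadd (vscale t x) (vscale (1 - t) y)).
Definition is_closed {n} (K : vec n -> Prop) : Prop :=
  forall x, (forall eps, 0 < eps -> exists y, K y /\ forall i, Rabs (x i - y i) < eps) ->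
    K x.
Definition is_pointed {n} (K : vec n -> Prop) : Prop :=
  forall x, K x -> K (vscale (-1) x) -> x = vzero.
Definition has_nonempty_interior {n} (K : vec n -> Prop) : Prop :=
  exists x eps, 0 < eps /\ forall y, (forall i, Rabs (y i - x i) < eps) -> K y.
Definition regular_closed_convex_cone {n} (K : vec n -> Prop) : Prop :=
  is_cone K /\ is_convex K /\ is_closed K /\ is_pointed K /\ has_nonempty_interior K.

Definition is_max_of (P : R -> Prop) (s : R) : Prop :=
  P s /\ forall t, P t -> t <= s.
Definition is_min_of (P : R -> Prop) (s : R) : Prop :=
  P s /\ forall t, P t -> s <= t.

Definition sym_set {p} (S : vec p -> Prop) : R -> Prop :=
  fun t => 0 <= t /\ forall w, S w -> S (vscale (- t) w).
Definition Sym0 {p} (S : vec p -> Prop) (s : R) : Prop :=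
  is_max_of (sym_set S) s.

Definition image_ball {n p} (A : vec n -> vec p) (K : vec n -> Prop)
  (N : vec n -> R) : vec p -> Prop :=
  fun w => exists x, K x /\ N x <= 1 /\ A x = w.

Definition inner_set {n} (K L : vec n -> Prop) (N : vec n -> R) (v : vec n) : R -> Prop :=
  fun t => exists x, K x /\ N x <= 1 /\ L (vadd x (vscale t v)).

(* value of the inner max in the extended reals:
   Some t  = t is the maximum; None = the set is unbounded above (+oo). *)
Definition inner_max {n} (K L : vec n -> Prop) (N : vec n -> R) (v : vec n)
  (r : option R) : Prop :=
  match r with
  | Some t => is_max_of (inner_set K L N v) t
  | None => forall M, exists t, inner_set K L N v t /\ M < t
  end.

Definition minmax_value {n} (K L : vec n -> Prop) (N : vec n -> R) (s : R) : Prop :=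
  (exists v, K v /\ N v = 1 /\ inner_max K L N v (Some s)) /\
  (forall v, K v -> N v = 1 ->
     exists r, inner_max K L N v r /\
       match r with Some t => s <= t | None => True end).

From Stdlib Require Import Reals.
From Stdlib Require Vectors.Fin.
Open Scope R_scope.
From Stdlib Require Import Lra Lia FunctionalExtensionality Classical.
From Stdlib Require Import IndefiniteDescription Rtopology.

(* Write B_K = {x in K : ||x|| <= 1} and T(y) = {t : exists x in B_K, x + t y in L}.
   Since ker A = L, A x = - t A y iff x + t y is in L, so t >= 0 lies in the
   symmetry set of A(B_K) iff t is in T(y) for every y in B_K: the map A has
   disappeared.  Each T(y) is an interval containing 0, closed by compactness of
   B_K and bounded when y is not in L.  Hence Sym exists and is at most max T(v)
   for every unit v in K (the maximum being +oo when v is in L).  For equality at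
   some v, let a be an interior point of K.  If a + k is in L for no k in K, then
   T(a) meets [0, +oo) only in 0 and Sym = 0.  Otherwise B_K + L contains a
   neighbourhood of 0, which makes v |-> max T(v) lower semicontinuous, and a
   cluster point of unit vectors v_k with max T(v_k) -> Sym is a minimiser. *)


(** * Coordinate vectors, the sup norm and seminorms *)

Lemma vec_ext {n} (x y : vec n) : (forall i, x i = y i) -> x = y.
Proof. intros; apply functional_extensionality; auto. Qed.

Lemma vec_S_ext {n} (x y : vec (S n)) :
  x Fin.F1 = y Fin.F1 -> (forall j, x (Fin.FS j) = y (Fin.FS j)) -> x = y.
Proof. intros H1 H2; apply vec_ext; intro i; apply (Fin.caseS' i); auto. Qed.

Lemma vec0_eq (x y : vec 0) : x = y.
Proof. apply vec_ext; intro i; apply (Fin.case0 (fun _ => _) i). Qed.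

Definition vcons {n} (a : R) (y : vec n) : vec (S n) :=
  fun i => Fin.caseS' i (fun _ => R) a y.

Definition vtail {n} (x : vec (S n)) : vec n := fun i => x (Fin.FS i).

Definition vsub {n} (x y : vec n) : vec n := vadd x (vscale (-1) y).

Ltac vring := apply vec_ext; intro; unfold vsub, vadd, vscale, vzero; ring.

Lemma vcons_vtail {n} (x : vec (S n)) :
  x = vadd (vscale (x Fin.F1) (vcons 1 vzero)) (vcons 0 (vtail x)).
Proof. apply vec_S_ext; unfold vadd, vscale, vcons, vtail, vzero; simpl; intros; ring. Qed.

Lemma vcons0_add {n} (x y : vec n) : vcons 0 (vadd x y) = vadd (vcons 0 x) (vcons 0 y).
Proof. apply vec_S_ext; unfold vadd, vcons; simpl; intros; ring. Qed.

Lemma vcons0_scale {n} a (x : vec n) : vcons 0 (vscale a x) = vscale a (vcons 0 x).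
Proof. apply vec_S_ext; unfold vscale, vcons; simpl; intros; ring. Qed.

Lemma linear_map_vzero {n p} (f : vec n -> vec p) : linear_map f -> f vzero = vzero.
Proof.
  intros [_ Hs]. replace (@vzero n) with (vscale 0 (@vzero n)) by vring.
  rewrite Hs; vring.
Qed.

Fixpoint sup_norm {n} : vec n -> R :=
  match n return vec n -> R with
  | O => fun _ => 0
  | S k => fun x => Rmax (Rabs (x Fin.F1)) (sup_norm (vtail x))
  end.

Lemma Rabs_le_sup_norm {n} (i : Fin.t n) (x : vec n) : Rabs (x i) <= sup_norm x.
Proof.
  induction i as [k|k i IH]; simpl.
  - apply Rmax_l.
  - eapply Rle_trans; [apply (IH (vtail x))|apply Rmax_r].
Qed.

Lemma sup_norm_le {n} (x : vec n) M : 0 <= M -> (forall i, Rabs (x i) <= M) -> sup_norm x <= M.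
Proof.
  induction n as [|n IH]; simpl; intros HM H; auto.
  apply Rmax_lub; [apply H|apply IH; auto; intro; apply H].
Qed.

Lemma sup_norm_nonneg {n} (x : vec n) : 0 <= sup_norm x.
Proof. induction n as [|n IH]; simpl; [lra|]; eapply Rle_trans; [apply IH|apply Rmax_r]. Qed.

Lemma sup_norm_eq0 {n} (x : vec n) : sup_norm x = 0 -> x = vzero.
Proof.
  intro H; apply vec_ext; intro i; pose proof (Rabs_le_sup_norm i x).
  pose proof (Rabs_pos (x i)); unfold vzero.
  destruct (Req_dec (x i) 0) as [|Hne]; auto. pose proof (Rabs_pos_lt _ Hne); lra.
Qed.

Definition is_seminorm {n} (P : vec n -> R) : Prop :=
  (forall a x, P (vscale a x) = Rabs a * P x) /\
  (forall x y, P (vadd x y) <= P x + P y).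

Lemma sup_norm_seminorm n : is_seminorm (@sup_norm n).
Proof.
  assert (Hle : forall a (x : vec n), sup_norm (vscale a x) <= Rabs a * sup_norm x).
  { intros a x; apply sup_norm_le; [apply Rmult_le_pos; [apply Rabs_pos|apply sup_norm_nonneg]|].
    intro i; unfold vscale; rewrite Rabs_mult.
    apply Rmult_le_compat_l; [apply Rabs_pos|apply Rabs_le_sup_norm]. }
  split.
  - intros a x; apply Rle_antisym; [apply Hle|].
    destruct (Req_dec a 0) as [->|Ha].
    + rewrite Rabs_R0, Rmult_0_l; apply sup_norm_nonneg.
    + pose proof (Hle (/ a) (vscale a x)) as H.
      replace (vscale (/ a) (vscale a x)) with x in H
        by (apply vec_ext; intro; unfold vscale; field; auto).
      rewrite Rabs_inv in H. pose proof (Rabs_pos_lt _ Ha).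
      apply (Rmult_le_compat_l (Rabs a)) in H; [|lra].
      rewrite <- Rmult_assoc, Rinv_r in H; lra.
  - intros x y; apply sup_norm_le.
    + pose proof (sup_norm_nonneg x); pose proof (sup_norm_nonneg y); lra.
    + intro i; unfold vadd; eapply Rle_trans; [apply Rabs_triang|].
      pose proof (Rabs_le_sup_norm i x); pose proof (Rabs_le_sup_norm i y); lra.
Qed.

Lemma norm_seminorm {n} (N : vec n -> R) : is_norm N -> is_seminorm N.
Proof. intros [_ [Hs Ht]]; split; auto. Qed.

Lemma seminorm_linear_map {n p} (P : vec p -> R) (f : vec n -> vec p) :
  is_seminorm P -> linear_map f -> is_seminorm (fun x => P (f x)).
Proof.
  intros [Ps Pt] [fa fs]; split; intros.
  - rewrite fs; auto.
  - rewrite fa; auto.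
Qed.

Section Seminorm.
Variables (n : nat) (P : vec n -> R).
Hypothesis HP : is_seminorm P.

Lemma seminorm_vzero : P vzero = 0.
Proof.
  destruct HP as [Hs _]. replace (@vzero n) with (vscale 0 (@vzero n)) by vring.
  rewrite Hs, Rabs_R0; ring.
Qed.

Lemma seminorm_opp x : P (vscale (-1) x) = P x.
Proof. destruct HP as [Hs _]; rewrite Hs, Rabs_left by lra; ring. Qed.

Lemma seminorm_nonneg x : 0 <= P x.
Proof.
  destruct HP as [_ Ht]. pose proof (Ht x (vscale (-1) x)) as H.
  replace (vadd x (vscale (-1) x)) with (@vzero n) in H by vring.
  rewrite seminorm_vzero, seminorm_opp in H; lra.
Qed.

Lemma seminorm_sub_sym x y : P (vsub x y) = P (vsub y x).
Proof.
  replace (vsub x y) with (vscale (-1) (vsub y x)) by vring; apply seminorm_opp.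
Qed.

Lemma seminorm_reverse_triang x y : Rabs (P x - P y) <= P (vsub x y).
Proof.
  destruct HP as [_ Ht]. apply Rabs_le; split.
  - pose proof (Ht x (vsub y x)) as H. replace (vadd x (vsub y x)) with y in H by vring.
    rewrite seminorm_sub_sym in H; lra.
  - pose proof (Ht y (vsub x y)) as H. replace (vadd y (vsub x y)) with x in H by vring.
    lra.
Qed.

End Seminorm.

Lemma seminorm_le_sup_norm n (P : vec n -> R) : is_seminorm P ->
  exists b, 0 <= b /\ forall x, P x <= b * sup_norm x.
Proof.
  revert P; induction n as [|n IH]; intros P HP.
  - exists 0; split; [lra|]; intro x; simpl.
    rewrite (vec0_eq x vzero), seminorm_vzero by auto; lra.
  - destruct (IH (fun y => P (vcons 0 y))) as [b [Hb Hbound]].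
    { destruct HP as [Hs Ht]; split; intros.
      - rewrite vcons0_scale; auto.
      - rewrite vcons0_add; auto. }
    set (e := vcons 1 (@vzero n)).
    pose proof (seminorm_nonneg _ P HP e).
    exists (P e + b); split; [lra|]; intro x.
    rewrite (vcons_vtail x) at 1. destruct HP as [Hs Ht].
    eapply Rle_trans; [apply Ht|]. rewrite Hs. fold e.
    pose proof (Hbound (vtail x)).
    assert (H1 : Rabs (x Fin.F1) <= sup_norm x) by apply (Rabs_le_sup_norm Fin.F1 x).
    assert (H2 : sup_norm (vtail x) <= sup_norm x) by (simpl; apply Rmax_r).
    pose proof (sup_norm_nonneg (vtail x)). nra.
Qed.

Lemma sup_norm_vsub_le {n} (x y : vec n) eps : 0 <= eps ->
  (forall i, Rabs (x i - y i) < eps) -> sup_norm (vsub x y) <= eps.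
Proof.
  intros He H; apply sup_norm_le; auto; intro i.
  unfold vsub, vadd, vscale; replace (x i + -1 * y i) with (x i - y i) by ring.
  left; auto.
Qed.

Lemma sup_norm_vsub_lt {n} (x y : vec n) eps :
  sup_norm (vsub x y) < eps -> forall i, Rabs (x i - y i) < eps.
Proof.
  intros H i; eapply Rle_lt_trans; [|exact H].
  replace (x i - y i) with (vsub x y i) by (unfold vsub, vadd, vscale; ring).
  apply Rabs_le_sup_norm.
Qed.

Lemma seminorm_small n (P : vec n -> R) : is_seminorm P ->
  forall e, 0 < e -> exists d, 0 < d /\ forall x, sup_norm x < d -> P x < e.
Proof.
  intros HP e He. destruct (seminorm_le_sup_norm n P HP) as [b [Hb Hbound]].
  exists (e / (b + 1)); split; [apply Rdiv_lt_0_compat; lra|]; intros x Hx.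
  eapply Rle_lt_trans; [apply Hbound|].
  apply Rle_lt_trans with (b * (e / (b + 1))); [apply Rmult_le_compat_l; lra|].
  apply (Rmult_lt_reg_r (b + 1)); [lra|].
  replace (b * (e / (b + 1)) * (b + 1)) with (b * e) by (field; lra). nra.
Qed.

(** * Sequential compactness *)

Lemma inv_INR_pos k : 0 < / (INR k + 1).
Proof. apply Rinv_0_lt_compat; pose proof (pos_INR k); lra. Qed.

Lemma inv_INR_small eps : 0 < eps ->
  exists N : nat, forall k, (N <= k)%nat -> / (INR k + 1) < eps.
Proof.
  intros He. destruct (archimed_cor1 eps He) as [N [HN HN0]]. exists N; intros k Hk.
  eapply Rle_lt_trans; [|apply HN].
  apply Rinv_le_contravar; [apply lt_0_INR; lia|apply le_INR in Hk; lra].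
Qed.

Definition strictly_increasing (phi : nat -> nat) : Prop :=
  forall k, (phi k < phi (S k))%nat.

Lemma strictly_increasing_lt phi : strictly_increasing phi ->
  forall a b, (a < b)%nat -> (phi a < phi b)%nat.
Proof. intros H a b Hab; induction Hab; [apply H|specialize (H m); lia]. Qed.

Lemma strictly_increasing_ge phi : strictly_increasing phi -> forall k, (k <= phi k)%nat.
Proof. intros H k; induction k; [lia|specialize (H k); lia]. Qed.

Lemma strictly_increasing_comp f g :
  strictly_increasing f -> strictly_increasing g -> strictly_increasing (fun k => f (g k)).
Proof. intros Hf Hg k; apply strictly_increasing_lt; auto. Qed.

Lemma Un_cv_subseq (u : nat -> R) l phi :
  strictly_increasing phi -> Un_cv u l -> Un_cv (fun k => u (phi k)) l.
Proof.
  intros Hp H eps He. destruct (H eps He) as [N HN]. exists N; intros k Hk.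
  apply HN. pose proof (strictly_increasing_ge phi Hp k); lia.
Qed.

(* The cluster point given by [Bolzano_Weierstrass] is approached within
   [1/(k+1)] at some index beyond any previous one, which defines [phi]. *)
Lemma R_bounded_convergent_subseq (w : nat -> R) M : (forall k, Rabs (w k) <= M) ->
  exists phi, strictly_increasing phi /\ exists l, Un_cv (fun k => w (phi k)) l.
Proof.
  intros Hb.
  destruct (Bolzano_Weierstrass w (fun c => -M <= c <= M) (compact_P3 (-M) M)) as [l Hl].
  { intro k; specialize (Hb k); pose proof (Rle_abs (w k)); pose proof (Rle_abs (- w k)).
    rewrite Rabs_Ropp in *; lra. }
  assert (Hnear : forall N k : nat, exists q, (N <= q)%nat /\ Rabs (w q - l) < / (INR k + 1)).
  { intros N k. destruct (Hl (disc l (mkposreal _ (inv_INR_pos k))) N) as [q [Hq1 Hq2]].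
    - exists (mkposreal _ (inv_INR_pos k)); intros y Hy; exact Hy.
    - exists q; split; auto. }
  destruct (functional_choice (fun Nk q => (fst Nk <= q)%nat /\
              Rabs (w q - l) < / (INR (snd Nk) + 1))) as [f Hf].
  { intros [N k]; apply Hnear. }
  set (phi := fix phi k := match k with
                           | O => f (O, O)
                           | S k' => f (S (phi k'), S k') end).
  exists phi; split.
  - intro k; simpl. destruct (Hf (S (phi k), S k)); simpl in *; lia.
  - exists l; intros eps He. destruct (inv_INR_small eps He) as [N HN].
    exists N; intros k Hk; unfold Rdist.
    eapply Rlt_trans; [|apply (HN k Hk)].
    destruct k; simpl; [apply (Hf (O, O))|apply (Hf (S (phi k), S k))].
Qed.

Definition converges_to {n} (u : nat -> vec n) (l : vec n) : Prop :=
  forall eps, 0 < eps -> exists N, forall k, (N <= k)%nat -> sup_norm (vsub (u k) l) < eps.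

Lemma bounded_convergent_subseq n (u : nat -> vec n) M :
  (forall k, sup_norm (u k) <= M) ->
  exists phi, strictly_increasing phi /\ exists l, converges_to (fun k => u (phi k)) l.
Proof.
  revert u; induction n as [|n IH]; intros u Hb.
  - exists (fun k => k); split; [intro; lia|].
    exists vzero; intros eps He; exists O; intros; simpl; lra.
  - destruct (R_bounded_convergent_subseq (fun k => u k Fin.F1) M) as [p1 [Hp1 [l1 Hl1]]].
    { intro k; eapply Rle_trans; [apply Rabs_le_sup_norm|apply Hb]. }
    destruct (IH (fun k => vtail (u (p1 k)))) as [p2 [Hp2 [l2 Hl2]]].
    { intro k; eapply Rle_trans; [|apply (Hb (p1 k))]; simpl; apply Rmax_r. }
    exists (fun k => p1 (p2 k)); split; [apply strictly_increasing_comp; auto|].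
    exists (vcons l1 l2); intros eps He.
    destruct (Un_cv_subseq _ _ _ Hp2 Hl1 eps He) as [N1 HN1].
    destruct (Hl2 eps He) as [N2 HN2].
    exists (Nat.max N1 N2); intros k Hk; simpl; apply Rmax_lub_lt.
    + specialize (HN1 k ltac:(lia)); unfold Rdist in HN1.
      unfold vsub, vadd, vscale; simpl.
      replace (_ + -1 * l1) with (u (p1 (p2 k)) Fin.F1 - l1) by ring.
      exact HN1.
    + apply (HN2 k ltac:(lia)).
Qed.

Definition cluster_point {n} (u : nat -> vec n) (l : vec n) : Prop :=
  forall eps, 0 < eps -> forall k0, exists k, (k0 <= k)%nat /\ sup_norm (vsub (u k) l) < eps.

Lemma bounded_cluster_point n (u : nat -> vec n) M :
  (forall k, sup_norm (u k) <= M) -> exists l, cluster_point u l.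
Proof.
  intro Hb. destruct (bounded_convergent_subseq n u M Hb) as [phi [Hphi [l Hl]]].
  exists l; intros eps He k0. destruct (Hl eps He) as [N HN].
  exists (phi (Nat.max k0 N)); split; [|apply HN; lia].
  pose proof (strictly_increasing_ge phi Hphi (Nat.max k0 N)); lia.
Qed.

Lemma closed_cluster_point {n} (S : vec n -> Prop) u l :
  is_closed S -> (forall k, S (u k)) -> cluster_point u l -> S l.
Proof.
  intros HS Hu Hl; apply HS; intros eps He. destruct (Hl eps He O) as [k [_ Hk]].
  exists (u k); split; auto; intro i.
  rewrite Rabs_minus_sym; apply sup_norm_vsub_lt; auto.
Qed.

Lemma seminorm_cluster_point {n} (P : vec n -> R) u l : is_seminorm P -> cluster_point u l ->
  forall e, 0 < e -> forall k0, exists k, (k0 <= k)%nat /\ Rabs (P (u k) - P l) < e.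
Proof.
  intros HP Hl e He k0. destruct (seminorm_small n P HP e He) as [d [Hd Hsmall]].
  destruct (Hl d Hd k0) as [k [Hk Hclose]].
  exists k; split; auto.
  eapply Rle_lt_trans; [apply seminorm_reverse_triang; auto|auto].
Qed.

(* Otherwise sup-norm unit vectors with [N]-values tending to 0 accumulate at a
   point of sup norm 1 and [N]-value 0. *)
Lemma sup_norm_le_norm n (N : vec n -> R) : is_norm N ->
  exists g, 0 < g /\ forall x, sup_norm x <= g * N x.
Proof.
  intro HN. pose proof (norm_seminorm N HN) as HsN.
  pose proof (sup_norm_seminorm n) as Hsup.
  apply NNPP; intro Hno.
  assert (Hbad : forall k : nat, exists x, sup_norm x = 1 /\ N x < / (INR k + 1)).
  { intro k. apply NNPP; intro Hk; apply Hno.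
    pose proof (pos_INR k).
    exists (INR k + 1); split; [lra|]. intro x. apply Rnot_lt_le; intro Hx; apply Hk.
    pose proof (seminorm_nonneg _ N HsN x).
    set (c := sup_norm x) in Hx.
    assert (Hc : 0 < c) by nra.
    exists (vscale (/ c) x). destruct Hsup as [Hs _]; destruct HsN as [HNs _].
    rewrite Hs, HNs, Rabs_pos_eq by (left; apply Rinv_0_lt_compat; auto).
    split; [fold c; field; lra|].
    apply (Rmult_lt_reg_l c); auto. rewrite <- Rmult_assoc, Rinv_r by lra.
    apply (Rmult_lt_reg_l (INR k + 1)); [lra|].
    replace ((INR k + 1) * (c * / (INR k + 1))) with c by (field; lra). lra. }
  destruct (functional_choice _ Hbad) as [u Hu].
  destruct (bounded_cluster_point n u 1) as [l Hl].
  { intro k; rewrite (proj1 (Hu k)); lra. }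
  assert (Hl0 : N l = 0).
  { apply Rle_antisym; [|apply (seminorm_nonneg _ N HsN)].
    apply Rle_plus_epsilon; intros e He.
    destruct (inv_INR_small (e / 2) ltac:(lra)) as [k0 Hk0].
    destruct (seminorm_cluster_point N u l HsN Hl (e / 2) ltac:(lra) k0) as [k [Hk Hclose]].
    pose proof (Rle_abs (N (u k) - N l)). pose proof (Rle_abs (- (N (u k) - N l))).
    rewrite Rabs_Ropp in *. pose proof (proj2 (Hu k)). pose proof (Hk0 k Hk). lra. }
  apply (proj1 HN) in Hl0; subst l.
  destruct (seminorm_cluster_point _ u vzero Hsup Hl (1 / 2) ltac:(lra) O) as [k [_ Hk]].
  rewrite (proj1 (Hu k)), (seminorm_vzero _ _ Hsup), Rminus_0_r, Rabs_R1 in Hk. lra.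
Qed.

Lemma closed_and {n} (S T : vec n -> Prop) :
  is_closed S -> is_closed T -> is_closed (fun x => S x /\ T x).
Proof.
  intros HS HT x Hx; split; [apply HS|apply HT]; intros eps He;
    destruct (Hx eps He) as [y [[Sy Ty] Hy]]; eauto.
Qed.

Lemma norm_inf_attained n (N : vec n -> R) (S : vec n -> Prop) c :
  is_norm N -> is_closed S -> (forall e, 0 < e -> exists x, S x /\ N x <= c + e) ->
  exists x, S x /\ N x <= c.
Proof.
  intros HN HS Hinf. pose proof (norm_seminorm N HN) as HsN.
  destruct (functional_choice (fun k x => S x /\ N x <= c + / (INR k + 1)))
    as [u Hu].
  { intro k; apply Hinf, inv_INR_pos. }
  destruct (sup_norm_le_norm n N HN) as [g [Hg Hgbound]].
  destruct (bounded_cluster_point n u (g * (c + 1))) as [l Hl].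
  { intro k. eapply Rle_trans; [apply Hgbound|]. apply Rmult_le_compat_l; [lra|].
    destruct (Hu k) as [_ Hk]. enough (/ (INR k + 1) <= 1) by lra.
    rewrite <- Rinv_1. apply Rinv_le_contravar; [lra|pose proof (pos_INR k); lra]. }
  exists l; split; [apply (closed_cluster_point S u l HS); auto; apply Hu|].
  apply Rle_plus_epsilon; intros e He.
  destruct (inv_INR_small (e / 2) ltac:(lra)) as [k0 Hk0].
  destruct (seminorm_cluster_point N u l HsN Hl (e / 2) ltac:(lra) k0) as [k [Hk Hclose]].
  pose proof (Rle_abs (- (N (u k) - N l))). rewrite Rabs_Ropp in *.
  pose proof (proj2 (Hu k)). pose proof (Hk0 k Hk). lra.
Qed.

(** * Dimension of linear images *)

Definition swap {n} (j k : Fin.t (S n)) : Fin.t (S n) :=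
  if Fin.eq_dec k j then Fin.F1 else if Fin.eq_dec k Fin.F1 then j else k.

Lemma swap_involutive {n} (j k : Fin.t (S n)) : swap j (swap j k) = k.
Proof.
  unfold swap. destruct (Fin.eq_dec k j) as [e|e].
  - destruct (Fin.eq_dec Fin.F1 j) as [e2|e2]; [subst; auto|].
    destruct (Fin.eq_dec (@Fin.F1 n) Fin.F1); [subst; auto|congruence].
  - destruct (Fin.eq_dec k Fin.F1) as [e2|e2].
    + destruct (Fin.eq_dec j j); [subst; auto|congruence].
    + destruct (Fin.eq_dec k j); [congruence|].
      destruct (Fin.eq_dec k Fin.F1); [congruence|auto].
Qed.

Lemma swap_F1 {n} (j : Fin.t (S n)) : swap j Fin.F1 = j.
Proof.
  unfold swap. destruct (Fin.eq_dec Fin.F1 j); auto.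
  destruct (Fin.eq_dec (@Fin.F1 n) Fin.F1); congruence.
Qed.

(* Eliminate the coordinate [j] against [w], after moving it to the front. *)
Lemma projection_along {n} (w : vec (S n)) j : w j <> 0 ->
  exists pi : vec (S n) -> vec n,
    linear_map pi /\ pi w = vzero /\ forall y, exists z, pi z = y.
Proof.
  intro Hj.
  exists (fun z i => z (swap j (Fin.FS i))
                     - z (swap j Fin.F1) / w (swap j Fin.F1) * w (swap j (Fin.FS i))).
  assert (Hj' : w (swap j Fin.F1) <> 0) by (rewrite swap_F1; auto).
  split; [|split].
  - split; intros; apply vec_ext; intro i; unfold vadd, vscale; field; auto.
  - apply vec_ext; intro i; unfold vzero; field; auto.
  - intro y. exists (fun k => vcons 0 y (swap j k)).
    apply vec_ext; intro i; rewrite !swap_involutive; simpl; field; auto.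
Qed.

(* Induction on [m]: split off the image [w] of the first basis vector, and
   project it away when it is nonzero. *)
Lemma linear_surjective_dim m : forall n (f : vec m -> vec n), linear_map f ->
  (forall z, exists u, f u = z) -> (n <= m)%nat.
Proof.
  induction m as [|m IH]; intros n f Hf Hs.
  - destruct n as [|n]; [lia|]. exfalso.
    destruct (Hs (fun _ => 1)) as [u Hu].
    rewrite (vec0_eq u vzero), linear_map_vzero in Hu by auto.
    apply (f_equal (fun g => g Fin.F1)) in Hu. unfold vzero in Hu; lra.
  - set (w := f (vcons 1 vzero)).
    set (g := fun u : vec m => f (vcons 0 u)).
    assert (Hg : linear_map g).
    { destruct Hf as [Ha Hsc]; split; intros; unfold g.
      - rewrite vcons0_add; auto.
      - rewrite vcons0_scale; auto. }
    assert (Hdec : forall u, f u = vadd (vscale (u Fin.F1) w) (g (vtail u))).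
    { intro u. destruct Hf as [Ha Hsc]. unfold w, g.
      rewrite <- Hsc, <- Ha, <- vcons_vtail; auto. }
    destruct (classic (exists j, w j <> 0)) as [[j Hj]|Hw].
    + destruct n as [|n]; [lia|].
      destruct (projection_along w j Hj) as [pi [[Hpa Hps] [Hpw Hpsurj]]].
      enough (n <= m)%nat by lia.
      apply (IH n (fun u => pi (g u))).
      * destruct Hg as [Hga Hgs]; split; intros; rewrite ?Hga, ?Hgs; auto.
      * intro y. destruct (Hpsurj y) as [z <-]. destruct (Hs z) as [u <-].
        exists (vtail u). rewrite Hdec, Hpa, Hps, Hpw. vring.
    + assert (Hw0 : w = vzero).
      { apply vec_ext; intro j; unfold vzero; apply NNPP; intro; apply Hw; eauto. }
      enough (n <= m)%nat by lia.
      apply (IH n g Hg). intro z. destruct (Hs z) as [u <-].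
      exists (vtail u). rewrite Hdec, Hw0. vring.
Qed.

Lemma grassmannian_proper n m L : (m < n)%nat -> in_Grassmannian n m L -> exists z, ~ L z.
Proof.
  intros Hmn [f [Hf [_ HL]]]. apply NNPP; intro Hall.
  enough (n <= m)%nat by lia.
  apply (linear_surjective_dim m n f Hf). intro z. apply HL.
  apply NNPP; intro; apply Hall; eauto.
Qed.

(** * The sets T(y) and the symmetry value *)

Lemma max_of_closed_down_set (E : R -> Prop) :
  E 0 -> (exists B, forall t, E t -> t <= B) ->
  (forall t, 0 <= t -> (forall t', 0 <= t' < t -> E t') -> E t) ->
  (forall t t', E t -> 0 <= t' <= t -> E t') ->
  exists s, 0 <= s /\ is_max_of E s.
Proof.
  intros E0 [B HB] Hclosed Hdown.
  destruct (completeness E) as [m [Hub Hlub]]; [exists B; exact HB|exists 0; auto|].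
  assert (Hm0 : 0 <= m) by (apply Hub; auto).
  exists m; split; auto; split; auto.
  apply Hclosed; auto. intros t' Ht'.
  destruct (classic (exists t'', E t'' /\ t' < t'')) as [[t'' [H1 H2]]|Hno].
  - apply (Hdown t''); auto; lra.
  - exfalso. enough (m <= t') by lra. apply Hlub. intros x Hx.
    apply Rnot_lt_le; intro; apply Hno; eauto.
Qed.

Lemma interior_point_in {n} (S : vec n -> Prop) a r : 0 < r ->
  (forall y, (forall i, Rabs (y i - a i) < r) -> S y) -> S a.
Proof. intros Hr Hball; apply Hball; intro i; rewrite Rminus_diag, Rabs_R0; auto. Qed.

Lemma cone_add {n} (K : vec n -> Prop) : is_cone K -> is_convex K ->
  forall x y, K x -> K y -> K (vadd x y).
Proof.
  intros [_ Kscale] Kconv x y Kx Ky.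
  replace (vadd x y) with (vscale 2 (vadd (vscale (1/2) x) (vscale (1 - 1/2) y)))
    by (apply vec_ext; intro; unfold vadd, vscale; field).
  apply Kscale; [lra|]. apply Kconv; auto; lra.
Qed.

Lemma inner_set_scale {n} (K L : vec n -> Prop) N v c t :
  inner_set K L N (vscale c v) t <-> inner_set K L N v (c * t).
Proof.
  unfold inner_set. replace (vscale t (vscale c v)) with (vscale (c * t) v) by vring. tauto.
Qed.

Section Symmetry.
Variables (n p : nat) (K L : vec n -> Prop) (N : vec n -> R) (A : vec n -> vec p).
Hypothesis HKcone : is_cone K.
Hypothesis HKconv : is_convex K.
Hypothesis HKclosed : is_closed K.
Hypothesis HN : is_norm N.
Hypothesis HA : linear_map A.
Hypothesis Hker : forall x, A x = vzero <-> L x.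

Lemma kernel_add x y : L x -> L y -> L (vadd x y).
Proof.
  rewrite <- !Hker; intros Hx Hy. destruct HA as [Ha _]. rewrite Ha, Hx, Hy; vring.
Qed.

Lemma kernel_scale a x : L x -> L (vscale a x).
Proof. rewrite <- !Hker; intro Hx. destruct HA as [_ Hs]. rewrite Hs, Hx; vring. Qed.

Lemma kernel_vzero : L vzero.
Proof. apply Hker, linear_map_vzero, HA. Qed.

Lemma kernel_shift_iff x t v : L (vadd x (vscale t v)) <-> A x = vscale (- t) (A v).
Proof.
  rewrite <- Hker. destruct HA as [Ha Hs]. rewrite Ha, Hs.
  split; intro H; apply vec_ext; intro i;
    apply (f_equal (fun w => w i)) in H; unfold vadd, vscale, vzero in *; lra.
Qed.

Lemma kernel_shift_closed t v : is_closed (fun x => L (vadd x (vscale t v))).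
Proof.
  set (P := fun x => sup_norm (A x)).
  pose proof (seminorm_linear_map sup_norm A (sup_norm_seminorm p) HA) as HP; fold P in HP.
  intros x Hx. apply Hker, sup_norm_eq0. fold (P (vadd x (vscale t v))).
  apply Rle_antisym; [|apply sup_norm_nonneg].
  apply Rle_plus_epsilon; intros e He.
  destruct (seminorm_small n P HP e He) as [d [Hd Hsmall]].
  destruct (Hx (d / 2) ltac:(lra)) as [y [Ly Hxy]].
  pose proof (seminorm_reverse_triang _ P HP (vadd x (vscale t v)) (vadd y (vscale t v))) as H.
  replace (vsub (vadd x (vscale t v)) (vadd y (vscale t v))) with (vsub x y) in H by vring.
  apply Hker in Ly; unfold P at 2 in H.
  rewrite Ly, (seminorm_vzero _ _ (sup_norm_seminorm p)), Rminus_0_r in H.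
  pose proof (sup_norm_vsub_le x y (d / 2) ltac:(lra) Hxy).
  pose proof (Hsmall (vsub x y) ltac:(lra)).
  pose proof (Rle_abs (P (vadd x (vscale t v)))). lra.
Qed.

Lemma inner_set_vzero v : inner_set K L N v 0.
Proof.
  exists vzero; split; [apply HKcone|split].
  - rewrite (seminorm_vzero _ _ (norm_seminorm N HN)); lra.
  - replace (vadd vzero (vscale 0 v)) with (@vzero n) by vring. apply kernel_vzero.
Qed.

Lemma inner_set_down v t t' : inner_set K L N v t -> 0 <= t' <= t -> inner_set K L N v t'.
Proof.
  intros [x [Kx [Nx Lx]]] Ht'.
  destruct (Req_dec t' 0) as [->|Hne]; [apply inner_set_vzero|].
  assert (Hc : 0 <= t' / t <= 1).
  { split; [apply Rmult_le_pos; [lra|left; apply Rinv_0_lt_compat; lra]|].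
    apply (Rmult_le_reg_r t); [lra|]. unfold Rdiv; rewrite Rmult_assoc, Rinv_l; lra. }
  exists (vscale (t' / t) x); split; [|split].
  - apply HKcone; [lra|auto].
  - destruct HN as [_ [Hs _]]. rewrite Hs, Rabs_pos_eq by lra. nra.
  - replace (vadd (vscale (t' / t) x) (vscale t' v)) with (vscale (t' / t) (vadd x (vscale t v)))
      by (apply vec_ext; intro; unfold vadd, vscale; field; lra).
    apply kernel_scale; auto.
Qed.

Lemma inner_set_bounded v : ~ L v -> exists B, forall t, inner_set K L N v t -> t <= B.
Proof.
  intro Hv.
  pose proof (seminorm_linear_map sup_norm A (sup_norm_seminorm p) HA) as HP.
  destruct (seminorm_le_sup_norm n _ HP) as [b [Hb Hbound]].
  destruct (sup_norm_le_norm n N HN) as [g [Hg Hgbound]].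
  assert (HAv : 0 < sup_norm (A v)).
  { destruct (sup_norm_nonneg (A v)) as [|H]; auto.
    exfalso; apply Hv, Hker, sup_norm_eq0; auto. }
  exists (b * g / sup_norm (A v)). intros t [x [Kx [Nx Lx]]].
  apply kernel_shift_iff in Lx. apply (f_equal sup_norm) in Lx.
  rewrite (proj1 (sup_norm_seminorm p)), Rabs_Ropp in Lx.
  assert (Rabs t * sup_norm (A v) <= b * g).
  { rewrite <- Lx. eapply Rle_trans; [apply Hbound|].
    apply Rmult_le_compat_l; auto. eapply Rle_trans; [apply Hgbound|]. nra. }
  apply (Rmult_le_reg_r (sup_norm (A v))); auto.
  unfold Rdiv; rewrite Rmult_assoc, Rinv_l by lra.
  pose proof (Rle_abs t). nra.
Qed.

(* Rescaling solutions for [t' < t] yields points [x] with [x + t v] in [L]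
   and norm arbitrarily close to [1]; the norm attains its infimum on this
   closed set. *)
Lemma inner_set_closed v t :
  0 <= t -> (forall t', 0 <= t' < t -> inner_set K L N v t') -> inner_set K L N v t.
Proof.
  intros Ht Hbelow.
  destruct (Req_dec t 0) as [->|Hne]; [apply inner_set_vzero|].
  destruct (norm_inf_attained n N (fun x => K x /\ L (vadd x (vscale t v))) 1 HN)
    as [x [[Kx Lx] Nx]].
  - apply closed_and; auto. apply kernel_shift_closed.
  - intros e He. destruct (Hbelow (t / (1 + e))) as [x [Kx [Nx Lx]]].
    { split; [left; apply Rdiv_lt_0_compat; lra|].
      apply (Rmult_lt_reg_r (1 + e)); [lra|].
      unfold Rdiv; rewrite Rmult_assoc, Rinv_l by lra. nra. }
    exists (vscale (1 + e) x); split; [split|].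
    + apply HKcone; auto; lra.
    + replace (vadd (vscale (1 + e) x) (vscale t v))
        with (vscale (1 + e) (vadd x (vscale (t / (1 + e)) v)))
        by (apply vec_ext; intro; unfold vadd, vscale; field; lra).
      apply kernel_scale; auto.
    + destruct HN as [_ [Hs _]]. rewrite Hs, Rabs_pos_eq by lra. nra.
  - exists x; auto.
Qed.

Lemma inner_max_exists v : ~ L v -> exists t, is_max_of (inner_set K L N v) t.
Proof.
  intro Hv. destruct (max_of_closed_down_set (inner_set K L N v)) as [t [_ Ht]]; eauto.
  - apply inner_set_vzero.
  - apply inner_set_bounded; auto.
  - apply inner_set_closed.
  - apply inner_set_down.
Qed.

Lemma sym_set_iff t : sym_set (image_ball A K N) t <->
  0 <= t /\ forall y, K y -> N y <= 1 -> inner_set K L N y t.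
Proof.
  split; intros [Ht H]; split; auto.
  - intros y Ky Ny.
    destruct (H (A y) (ex_intro _ y (conj Ky (conj Ny eq_refl)))) as [x [Kx [Nx Ax]]].
    exists x; repeat split; auto. apply kernel_shift_iff; auto.
  - intros w [y [Ky [Ny <-]]].
    destruct (H y Ky Ny) as [x [Kx [Nx Lx]]].
    exists x; repeat split; auto. apply kernel_shift_iff; auto.
Qed.

Lemma sym_in_inner_set s y : Sym0 (image_ball A K N) s -> K y -> N y <= 1 -> inner_set K L N y s.
Proof. intros [Hs _] Ky Ny. apply sym_set_iff in Hs. apply Hs; auto. Qed.

Lemma cone_unit_multiple y : K y -> y <> vzero ->
  0 < N y /\ K (vscale (/ N y) y) /\ N (vscale (/ N y) y) = 1.
Proof.
  intros Ky Hy. pose proof (seminorm_nonneg _ N (norm_seminorm N HN) y) as Hnn.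
  assert (Hpos : 0 < N y) by (destruct Hnn as [|H]; auto; exfalso; apply Hy, HN; auto).
  assert (Hinv : 0 <= / N y) by (left; apply Rinv_0_lt_compat; auto).
  split; [|split]; auto.
  - apply HKcone; auto.
  - destruct HN as [_ [Hs _]]. rewrite Hs, Rabs_pos_eq by auto. field; lra.
Qed.

Lemma sym_max_exists : (exists y, K y /\ ~ L y) -> exists s, Sym0 (image_ball A K N) s.
Proof.
  intros [y [Ky Hy]].
  assert (Hy0 : y <> vzero) by (intros ->; apply Hy, kernel_vzero).
  destruct (cone_unit_multiple y Ky Hy0) as [Hpos [Kv Nv]].
  assert (Hv : ~ L (vscale (/ N y) y)).
  { intro Lv; apply Hy.
    replace y with (vscale (N y) (vscale (/ N y) y))
      by (apply vec_ext; intro; unfold vscale; field; lra).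
    apply kernel_scale; auto. }
  destruct (inner_set_bounded _ Hv) as [B HB].
  destruct (max_of_closed_down_set (sym_set (image_ball A K N))) as [s [_ Hs]].
  - apply sym_set_iff; split; [lra|]; intros; apply inner_set_vzero.
  - exists B; intros t Ht. apply sym_set_iff in Ht. apply HB, Ht; auto; lra.
  - intros t Ht Hbelow. apply sym_set_iff; split; auto; intros z Kz Nz.
    apply inner_set_closed; auto; intros t' Ht'.
    apply (proj1 (sym_set_iff t') (Hbelow t' Ht')); auto.
  - intros t t' Ht Ht'. apply sym_set_iff in Ht. apply sym_set_iff.
    split; [lra|]; intros z Kz Nz. apply (inner_set_down z t); auto. apply Ht; auto.
  - exists s; exact Hs.
Qed.

Lemma inner_max_ge_sym s v : Sym0 (image_ball A K N) s -> K v -> N v = 1 ->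
  exists r, inner_max K L N v r /\ match r with Some t => s <= t | None => True end.
Proof.
  intros Hs Kv Nv. destruct (classic (L v)) as [Lv|Hv].
  - exists None; split; [|exact I]. intro M. exists (M + 1); split; [|lra].
    exists vzero; split; [apply HKcone|split].
    + rewrite (seminorm_vzero _ _ (norm_seminorm N HN)); lra.
    + replace (vadd vzero (vscale (M + 1) v)) with (vscale (M + 1) v) by vring.
      apply kernel_scale; auto.
  - destruct (inner_max_exists v Hv) as [t Ht].
    exists (Some t); split; [exact Ht|]. apply Ht, sym_in_inner_set; auto; lra.
Qed.

Lemma sym_not_max s t : Sym0 (image_ball A K N) s -> s < t ->
  exists v, K v /\ N v = 1 /\ forall u, inner_set K L N v u -> u < t.
Proof.
  intros [Hs Hmax] Hst. pose proof (proj1 Hs) as Hs0.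
  assert (Hno : ~ sym_set (image_ball A K N) t) by (intro H; apply Hmax in H; lra).
  rewrite sym_set_iff in Hno.
  assert (exists y, K y /\ N y <= 1 /\ ~ inner_set K L N y t) as [y [Ky [Ny Hy]]].
  { apply NNPP; intro Hall; apply Hno; split; [lra|].
    intros y Ky Ny; apply NNPP; intro; apply Hall; eauto. }
  assert (Hy0 : y <> vzero).
  { intros ->; apply Hy. exists vzero; split; [apply HKcone|split].
    - rewrite (seminorm_vzero _ _ (norm_seminorm N HN)); lra.
    - replace (vadd vzero (vscale t vzero)) with (@vzero n) by vring; apply kernel_vzero. }
  destruct (cone_unit_multiple y Ky Hy0) as [Hpos [Kv Nv]].
  exists (vscale (/ N y) y); split; auto; split; auto.
  intros u Hu. apply inner_set_scale in Hu. apply Rnot_le_lt; intro Htu. apply Hy.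
  assert (1 <= / N y) by (rewrite <- Rinv_1; apply Rinv_le_contravar; lra).
  apply (inner_set_down y (/ N y * u)); auto. nra.
Qed.

Lemma minimizer_of_unreachable s y : Sym0 (image_ball A K N) s -> K y ->
  ~ (exists x, K x /\ L (vadd x y)) ->
  exists v, K v /\ N v = 1 /\ inner_max K L N v (Some s).
Proof.
  intros Hs Ky Hy. pose proof (proj1 (proj1 Hs)) as Hs0.
  assert (Hy0 : y <> vzero).
  { intros ->; apply Hy. exists vzero; split; [apply HKcone|].
    replace (vadd vzero vzero) with (@vzero n) by vring; apply kernel_vzero. }
  destruct (cone_unit_multiple y Ky Hy0) as [Hpos [Kv Nv]].
  exists (vscale (/ N y) y); split; auto; split; auto; split.
  - apply sym_in_inner_set; auto; lra.
  - intros u Hu. apply inner_set_scale in Hu. destruct Hu as [x [Kx [_ Lx]]].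
    apply Rnot_lt_le; intro Hsu. apply Hy.
    set (c := / N y * u).
    assert (Hc : 0 < c) by (apply Rmult_lt_0_compat; [apply Rinv_0_lt_compat|]; lra).
    exists (vscale (/ c) x); split; [apply HKcone; auto; left; apply Rinv_0_lt_compat; auto|].
    replace (vadd (vscale (/ c) x) y) with (vscale (/ c) (vadd x (vscale c y)))
      by (apply vec_ext; intro; unfold vadd, vscale; field; lra).
    apply kernel_scale; auto.
Qed.

Lemma interior_escapes_kernel a r : 0 < r ->
  (forall y, (forall i, Rabs (y i - a i) < r) -> K y) ->
  (exists z, ~ L z) -> exists y, K y /\ ~ L y.
Proof.
  intros Hr Hball [z Hz].
  pose proof (interior_point_in K a r Hr Hball) as Ka.
  destruct (classic (L a)) as [La|Ha]; [|eauto].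
  set (e := r / (2 * (sup_norm z + 1))).
  pose proof (sup_norm_nonneg z).
  assert (He : 0 < e) by (apply Rdiv_lt_0_compat; lra).
  exists (vadd a (vscale e z)); split.
  - apply Hball; intro i. unfold vadd, vscale.
    replace (a i + e * z i - a i) with (e * z i) by ring.
    rewrite Rabs_mult, (Rabs_pos_eq e) by lra. pose proof (Rabs_le_sup_norm i z).
    assert (e * (sup_norm z + 1) = r / 2) by (unfold e; field; lra). nra.
  - intro Hl. apply Hz.
    replace z with (vscale (/ e) (vadd (vadd a (vscale e z)) (vscale (-1) a)))
      by (apply vec_ext; intro; unfold vadd, vscale; field; lra).
    apply kernel_scale, kernel_add, kernel_scale; auto.
Qed.

(* [c := (a + M z + k0) / M] for a large constant [M]: then [c - z] is the
   multiple [(a + k0) / M] of a point of [L]. *)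
Lemma interior_absorbs a r k0 : 0 < r ->
  (forall y, (forall i, Rabs (y i - a i) < r) -> K y) -> K k0 -> L (vadd k0 a) ->
  exists rho, 0 < rho /\
    forall z, sup_norm z <= rho -> exists c, K c /\ N c <= 1 /\ L (vsub c z).
Proof.
  intros Hr Hball Kk0 Lk0.
  pose proof (norm_seminorm N HN) as HsN.
  destruct (seminorm_le_sup_norm n N HsN) as [b [Hb Hbound]].
  pose proof (interior_point_in K a r Hr Hball) as Ka.
  set (M := N a + b * r + N k0 + 1).
  assert (HM : 0 < M).
  { pose proof (seminorm_nonneg _ N HsN a); pose proof (seminorm_nonneg _ N HsN k0).
    unfold M; nra. }
  exists (r / (2 * M)); split; [apply Rdiv_lt_0_compat; lra|]; intros z Hz.
  set (z' := vscale M z).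
  assert (Hz' : sup_norm z' <= r / 2).
  { unfold z'; rewrite (proj1 (sup_norm_seminorm n)), Rabs_pos_eq by lra.
    replace (r / 2) with (M * (r / (2 * M))) by (field; lra).
    apply Rmult_le_compat_l; lra. }
  assert (Kaz : K (vadd a z')).
  { apply Hball; intro i. unfold vadd; replace (a i + z' i - a i) with (z' i) by ring.
    pose proof (Rabs_le_sup_norm i z'); lra. }
  destruct HN as [_ [Ns Nt]].
  exists (vscale (/ M) (vadd (vadd a z') k0)); split; [|split].
  - apply HKcone; [left; apply Rinv_0_lt_compat; auto|].
    apply cone_add; auto; apply cone_add; auto.
  - rewrite Ns, Rabs_pos_eq by (left; apply Rinv_0_lt_compat; auto).
    assert (N (vadd (vadd a z') k0) <= M).
    { eapply Rle_trans; [apply Nt|]. eapply Rle_trans; [apply Rplus_le_compat_r, Nt|].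
      pose proof (Hbound z').
      assert (b * sup_norm z' <= b * r) by (apply Rmult_le_compat_l; lra).
      unfold M; lra. }
    apply (Rmult_le_reg_l M); auto. rewrite <- Rmult_assoc, Rinv_r by lra. lra.
  - replace (vsub (vscale (/ M) (vadd (vadd a z') k0)) z) with (vscale (/ M) (vadd k0 a))
      by (apply vec_ext; intro; unfold z', vsub, vadd, vscale; field; lra).
    apply kernel_scale; auto.
Qed.

(* [x + lam t v = lam (x0 + t l) + (1 - lam) (c - z)] with [x = lam x0 + (1 - lam) c]
   and [z = - lam t / (1 - lam) (v - l)] small. *)
Lemma inner_set_near rho l t lam : 0 < rho ->
  (forall z, sup_norm z <= rho -> exists c, K c /\ N c <= 1 /\ L (vsub c z)) ->
  inner_set K L N l t -> 0 <= t -> 0 < lam < 1 ->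
  exists d, 0 < d /\ forall v, sup_norm (vsub v l) < d -> inner_set K L N v (lam * t).
Proof.
  intros Hrho Habs [x0 [Kx0 [Nx0 Lx0]]] Ht Hlam.
  set (cc := lam * t / (1 - lam)).
  assert (Hcc : 0 <= cc) by (apply Rmult_le_pos; [nra|left; apply Rinv_0_lt_compat; lra]).
  exists (rho / (cc + 1)); split; [apply Rdiv_lt_0_compat; lra|]; intros v Hv.
  destruct (Habs (vscale (- cc) (vsub v l))) as [c [Kc [Nc Lc]]].
  { rewrite (proj1 (sup_norm_seminorm n)), Rabs_Ropp, Rabs_pos_eq by lra.
    apply Rle_trans with (cc * (rho / (cc + 1))); [apply Rmult_le_compat_l; lra|].
    apply (Rmult_le_reg_r (cc + 1)); [lra|].
    replace (cc * (rho / (cc + 1)) * (cc + 1)) with (cc * rho) by (field; lra). nra. }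
  destruct HN as [_ [Ns Nt]].
  exists (vadd (vscale lam x0) (vscale (1 - lam) c)); split; [|split].
  - apply HKconv; auto; lra.
  - eapply Rle_trans; [apply Nt|]. rewrite !Ns, !Rabs_pos_eq by lra. nra.
  - replace (vadd (vadd (vscale lam x0) (vscale (1 - lam) c)) (vscale (lam * t) v))
      with (vadd (vscale lam (vadd x0 (vscale t l)))
                 (vscale (1 - lam) (vsub c (vscale (- cc) (vsub v l)))))
      by (apply vec_ext; intro; unfold cc, vsub, vadd, vscale; field; lra).
    apply kernel_add; apply kernel_scale; auto.
Qed.

(* Take [v_k] whose inner maximum is below [s + 1/(k+1)] and a cluster point
   [l]; a value [t > s] at [l] would give the value [(s + t)/2] near [l]. *)
Lemma minimizer_of_absorbing s rho : Sym0 (image_ball A K N) s -> 0 < rho ->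
  (forall z, sup_norm z <= rho -> exists c, K c /\ N c <= 1 /\ L (vsub c z)) ->
  exists v, K v /\ N v = 1 /\ inner_max K L N v (Some s).
Proof.
  intros Hs Hrho Habs. pose proof (proj1 (proj1 Hs)) as Hs0.
  destruct (functional_choice (fun k v => K v /\ N v = 1 /\
              forall u, inner_set K L N v u -> u < s + / (INR k + 1))) as [vs Hvs].
  { intro k; apply (sym_not_max s); auto. pose proof (inv_INR_pos k); lra. }
  destruct (sup_norm_le_norm n N HN) as [g [Hg Hgbound]].
  destruct (bounded_cluster_point n vs g) as [l Hl].
  { intro k; eapply Rle_trans; [apply Hgbound|]. rewrite (proj1 (proj2 (Hvs k))); lra. }
  assert (Kl : K l) by (apply (closed_cluster_point K vs l); auto; apply Hvs).
  assert (Nl : N l = 1).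
  { destruct (Req_dec (N l) 1) as [|Hne]; auto; exfalso.
    destruct (seminorm_cluster_point N vs l (norm_seminorm N HN) Hl (Rabs (1 - N l))
                (Rabs_pos_lt (1 - N l) ltac:(intro; apply Hne; lra)) O) as [k [_ Hk]].
    rewrite (proj1 (proj2 (Hvs k))) in Hk; lra. }
  exists l; split; auto; split; auto; split.
  - apply sym_in_inner_set; auto; lra.
  - intros t Ht. apply Rnot_lt_le; intro Hst.
    set (lam := (s + t) / (2 * t)).
    assert (Hlam : 0 < lam < 1).
    { unfold lam; split; [apply Rdiv_lt_0_compat; lra|].
      apply (Rmult_lt_reg_r (2 * t)); [lra|].
      unfold Rdiv; rewrite Rmult_assoc, Rinv_l; lra. }
    assert (Hlt : lam * t = (s + t) / 2) by (unfold lam; field; lra).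
    destruct (inner_set_near rho l t lam Hrho Habs Ht ltac:(lra) Hlam) as [d [Hd Hnear]].
    destruct (inv_INR_small ((t - s) / 2) ltac:(lra)) as [k0 Hk0].
    destruct (Hl d Hd k0) as [k [Hk Hclose]].
    pose proof (proj2 (proj2 (Hvs k)) _ (Hnear _ Hclose)). pose proof (Hk0 k Hk). lra.
Qed.

End Symmetry.

Theorem mainTheorem10
  (n m p : nat) (Hm1 : (1 <= m)%nat) (Hmn : (m < n)%nat)
  (K : vec n -> Prop) (HK : regular_closed_convex_cone K)
  (N : vec n -> R) (HN : is_norm N)
  (L : vec n -> Prop) (HL : in_Grassmannian n m L)
  (A : vec n -> vec p) (HA : linear_map A)
  (Hker : forall x, A x = vzero <-> L x) :
  exists s, Sym0 (image_ball A K N) s /\ minmax_value K L N s.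
Proof.
  destruct HK as [Kcone [Kconv [Kclosed [_ [a [r [Hr Hball]]]]]]].
  destruct (sym_max_exists n p K L N A Kcone Kclosed HN HA Hker) as [s Hs].
  { eapply interior_escapes_kernel; eauto. eapply grassmannian_proper; eauto. }
  exists s; split; [exact Hs|split].
  - destruct (classic (exists k0, K k0 /\ L (vadd k0 a))) as [[k0 [Kk0 Lk0]]|Hno].
    + destruct (interior_absorbs n p K L N A Kcone Kconv HN HA Hker a r k0 Hr Hball Kk0 Lk0)
        as [rho [Hrho Habs]].
      eapply minimizer_of_absorbing; eauto.
    + eapply minimizer_of_unreachable; eauto. eapply interior_point_in; eauto.
  - intros v Kv Nv. eapply inner_max_ge_sym; eauto.
Qed.
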